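(* Let $d$ be a prime power, $\beta>0$, $0\le\eta\le 1$, and let $\rho^{\mathrm{iso}}_{a|x}(\eta)=\eta\frac1d|\phi^a_x\rangle\langle\phi^a_x|+(1-\eta)\frac{\mathbb{I}}{d^2}$, $a\in\{0,\dots,d-1\}$, $x\in\{0,\dots,d\}$, built from a complete set of $d+1$ mutually unbiased bases of $\mathbb{C}^d$. If $\eta>\Big(\sqrt d+\frac{1}{d+\sqrt d+1}\Big)^{-1}$, then $$\xi_{\max}\big(\{\rho^{\mathrm{iso}}_{a|x}(\eta)\}_{a,x}\big)\ \ge\ \frac{(d+1)\big(1+\eta(d-1)\big)}{d(1+\sqrt d)}\ >\ 1;$$ in particular for $\eta=1$, $\xi_{\max}\ge\frac{d+1}{\sqrt d+1}$.
   Context: A complete set of MUBs: $d+1$ orthonormal bases $\{|\phi^a_x\rangle\}_a$ of $\mathbb{C}^d$ with $|\langle\phi^a_x|\phi^b_y\rangle|=1/\sqrt d$ for $x\ne y$. For an assemblage $\{\rho_{a|x}\}$ (PSD operators $\rho_{a|x}=\operatorname{Tr}_A[(M_{a|x}\otimes\mathbb{I})\rho_{AB}]$) with $p(a|x)=\operatorname{Tr}\rho_{a|x}$ and Hermitian $H_{a|x}$ on $\mathbb{C}^d$, $Q_c(\{\rho_{a|x}\},\{H_{a|x}\})=\frac1n\sum_{a,x}[\operatorname{Tr}(H_{a|x}\rho_{a|x})-\operatorname{Tr}(H_{a|x}\gamma_{a|x})]$ with $\gamma_{a|x}=p(a|x)e^{-\beta H_{a|x}}/\operatorname{Tr}e^{-\beta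 H_{a|x}}$, $n$ the number of inputs. $\mathcal{L}$ is the set of unsteerable assemblages (those with $\rho_{a|x}=\int d\lambda\,p(\lambda)p(a|x,\lambda)\sigma_\lambda$), $\mathcal{L}_\rho=\{\{\sigma_{a|x}\}\in\mathcal{L}:\operatorname{Tr}\sigma_{a|x}=\operatorname{Tr}\rho_{a|x}\ \forall a,x\}$, and $\xi_{\max}(\{\rho_{a|x}\})=\sup_{\{H_{a|x}\}} Q_c(\{\rho_{a|x}\},\{H_{a|x}\})/\max_{\{\sigma_{a|x}\}\in\mathcal{L}_\rho}Q_c(\{\sigma_{a|x}\},\{H_{a|x}\})$, the supremum over Hermitian families with strictly positive denominator. *)

From mathcomp Require Import all_boot all_order all_algebra.
From mathcomp Require Import complex.
From mathcomp Require Import all_classical all_reals all_analysis.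
Set Implicit Arguments. Unset Strict Implicit. Unset Printing Implicit Defensive.
Import Order.TTheory GRing.Theory Num.Theory numFieldNormedType.Exports.
Local Open Scope ring_scope.
Local Open Scope classical_set_scope.

Section Defs.
Variable R : realType.
Local Notation C := R[i].

Definition rc (x : R) : C := (x%:C)%C.

Definition adjmx m n (A : 'M[C]_(m, n)) : 'M[C]_(n, m) := (map_mx conjc A)^T.

Definition hermitian d (A : 'M[C]_d) : Prop := adjmx A = A.

(* positive semidefinite: Hermitian with <v|A|v> >= 0 for all v
   (in the order of R[i], 0 <= z means z is a nonnegative real) *)
Definition psd d (A : 'M[C]_d) : Prop :=
  hermitian A /\ forall v : 'cV[C]_d, 0 <= (adjmx v *m A *m v) 0 0.

Definition density d (A : 'M[C]_d) : Prop := psd A /\ \tr A = 1.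

Definition exp_partial d (A : 'M[C]_d) (n : nat) : 'M[C]_d :=
  \sum_(k < n) (k`!%:R)^-1 *: A ^+ k.

Definition expmx d (A : 'M[C]_d) : 'M[C]_d :=
  \matrix_(i, j)
    (rc (limn (fun n => complex.Re (exp_partial A n i j)))
     + 'i%C * rc (limn (fun n => complex.Im (exp_partial A n i j)))).

(* assemblages with nx inputs x and na outcomes a on C^d; s x a = rho_{a|x} *)
Definition assemblage nx na d := 'I_nx -> 'I_na -> 'M[C]_d.

Definition prob nx na d (s : assemblage nx na d) x a : R :=
  complex.Re (\tr (s x a)).

Definition gibbs nx na d (beta : R) (s : assemblage nx na d)
    (H : assemblage nx na d) x a : 'M[C]_d :=
  let E := expmx ((- rc beta) *: H x a) in
  (rc (prob s x a) / \tr E) *: E.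

(* Q_c({rho},{H}) = 1/n sum_{a,x} [Tr(H rho) - Tr(H gamma)]  (n = nx inputs).
   The traces are real for Hermitian H and PSD rho; we take real parts. *)
Definition Qc nx na d (beta : R) (s H : assemblage nx na d) : R :=
  (nx%:R)^-1 * \sum_(x < nx) \sum_(a < na)
    (complex.Re (\tr (H x a *m s x a))
     - complex.Re (\tr (H x a *m gibbs beta s H x a))).

Definition unsteerable nx na d (s : assemblage nx na d) : Prop :=
  exists (m : nat) (p : 'I_m -> R) (D : 'I_m -> 'I_nx -> 'I_na -> R)
         (sig : 'I_m -> 'M[C]_d),
    (forall l, 0 <= p l) /\ \sum_(l < m) p l = 1 /\
        (forall l x a, 0 <= D l x a) /\
        (forall l x, \sum_(a < na) D l x a = 1) /\
        (forall l, density (sig l)) /\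
        (forall x a, s x a = \sum_(l < m) rc (p l * D l x a) *: sig l).

Definition Lrho nx na d (s : assemblage nx na d) : set (assemblage nx na d) :=
  [set t | unsteerable t /\ forall x a, \tr (t x a) = \tr (s x a)].

Definition denom nx na d (beta : R) (s H : assemblage nx na d) : \bar R :=
  ereal_sup [set (Qc beta t H)%:E | t in Lrho s].

Definition herm_family nx na d (H : assemblage nx na d) : Prop :=
  forall x a, hermitian (H x a).

Definition xi_max nx na d (beta : R) (s : assemblage nx na d) : \bar R :=
  ereal_sup [set (Qc beta s H / fine (denom beta s H))%:E
            | H in [set H | herm_family H /\ (0 < denom beta s H)%E
                            /\ denom beta s H \is a fin_num]].

(* complete set of d+1 mutually unbiased bases of C^d:
   phi x a = |phi^a_x>, x in {0..d}, a in {0..d-1} *)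
Definition complete_MUB d (phi : 'I_d.+1 -> 'I_d -> 'cV[C]_d) : Prop :=
  (forall x a b, (adjmx (phi x a) *m phi x b) 0 0 = (a == b)%:R) /\
  (forall x y a b, x != y ->
     `|(adjmx (phi x a) *m phi y b) 0 0| = rc (Num.sqrt (d%:R))^-1).

Definition rho_iso d (phi : 'I_d.+1 -> 'I_d -> 'cV[C]_d) (eta : R)
    : assemblage d.+1 d d :=
  fun x a => rc (eta / d%:R) *: (phi x a *m adjmx (phi x a))
             + rc ((1 - eta) / (d%:R ^+ 2)) *: 1%:M.

End Defs.

Definition prime_power (d : nat) : Prop :=
  exists p k : nat, [/\ prime p, (0 < k)%N & d = (p ^ k)%N].

From HB Require Import structures.
From Pilot Require Import Defs.
From mathcomp Require Import all_boot all_order all_algebra.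
From mathcomp Require Import complex.
From mathcomp Require Import all_classical all_reals all_analysis.
From mathcomp Require Import ring lra.
Import Order.TTheory GRing.Theory Num.Theory numFieldNormedType.Exports.
Local Open Scope ring_scope.
Set Implicit Arguments. Unset Strict Implicit. Unset Printing Implicit Defensive.

(* Take H_{a|x} := |phi^a_x><phi^a_x|.  A rank-one projector P satisfies
   e^{-beta P} = 1 - P + e^{-beta} P, so every assemblage with p(a|x) = 1/d
   (in particular every element of L_rho) has
   Q_c(sigma, H) = S(sigma) / (d + 1) - w, where S(sigma) = sum_{a,x} Tr(P_{a|x} sigma_{a|x})
   and w = e^{-beta} / (d - 1 + e^{-beta}) < 1/d.
   For unsteerable sigma, S(sigma) <= 1 + sqrt d: by convexity it is enough to
   bound sum_{a,x} D(a|x) Tr(P_{a|x} s) for a single state s and stochastic D;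
   as the MUB projectors form a tight frame, sum_{a,x} (Tr(P_{a|x} s) - 1/d)^2
   <= Tr s^2 - 1/d <= 1 - 1/d, and weighted AM-GM concludes.  The maximally
   mixed assemblage lies in L_rho with Q_c = 1/d - w > 0, so the denominator
   of xi_max is positive, and S(rho^iso) = (d+1)(1 + eta(d-1))/d >= 1 + sqrt d
   above the threshold; finally (S - K)/(U - K) >= S/U when 0 <= K < U <= S. *)

Section Adjoint.
Variable R : realType.
Local Notation C := R[i].

HB.instance Definition _ := GRing.RMorphism.copy (@rc R) (real_complex R).

Lemma conjc_rc (x : R) : conjc (rc x) = rc x.
Proof. exact: conjc_real. Qed.

Lemma Re_rcM (x : R) (z : C) : complex.Re (rc x * z) = x * complex.Re z.
Proof. by case: z => a b /=; ring. Qed.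

Lemma adjmxE m n (A : 'M[C]_(m, n)) i j : adjmx A i j = conjc (A j i).
Proof. by rewrite !mxE. Qed.

Lemma adjmxK m n (A : 'M[C]_(m, n)) : adjmx (adjmx A) = A.
Proof. by apply/matrixP => i j; rewrite !adjmxE conjcK. Qed.

Lemma adjmxM m n p (A : 'M[C]_(m, n)) (B : 'M[C]_(n, p)) :
  adjmx (A *m B) = adjmx B *m adjmx A.
Proof. by rewrite /adjmx map_mxM trmx_mul. Qed.

Lemma adjmxD m n (A B : 'M[C]_(m, n)) : adjmx (A + B) = adjmx A + adjmx B.
Proof. by rewrite /adjmx map_mxD linearD. Qed.

Lemma adjmxB m n (A B : 'M[C]_(m, n)) : adjmx (A - B) = adjmx A - adjmx B.
Proof. by rewrite /adjmx map_mxB linearB. Qed.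

Lemma adjmxZ m n (c : C) (A : 'M[C]_(m, n)) : adjmx (c *: A) = conjc c *: adjmx A.
Proof. by apply/matrixP => i j; rewrite !mxE rmorphM. Qed.

Lemma adjmx_sum m n I (r : seq I) (P : pred I) (F : I -> 'M[C]_(m, n)) :
  adjmx (\sum_(i <- r | P i) F i) = \sum_(i <- r | P i) adjmx (F i).
Proof. by rewrite /adjmx map_mx_sum; exact: raddf_sum. Qed.

Lemma adjmx1 n : adjmx (1%:M : 'M[C]_n) = 1%:M.
Proof. by rewrite /adjmx map_mx1 trmx1. Qed.

End Adjoint.

Section HilbertSchmidt.
Variables (R : realType) (n : nat).
Local Notation C := R[i].
Implicit Types A B D Z : 'M[C]_n.

Definition hsdot A B : R := complex.Re (\tr (A *m B)).

Lemma hsdotC A B : hsdot A B = hsdot B A.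
Proof. by rewrite /hsdot mxtrace_mulC. Qed.

Lemma hsdotDl A B D : hsdot (A + B) D = hsdot A D + hsdot B D.
Proof. by rewrite /hsdot mulmxDl !raddfD. Qed.

Lemma hsdotBl A B D : hsdot (A - B) D = hsdot A D - hsdot B D.
Proof. by rewrite /hsdot mulmxBl !raddfB. Qed.

Lemma hsdotZl (x : R) A D : hsdot (rc x *: A) D = x * hsdot A D.
Proof. by rewrite /hsdot -scalemxAl mxtraceZ Re_rcM. Qed.

Lemma hsdot_suml I (r : seq I) (P : pred I) (F : I -> 'M[C]_n) D :
  hsdot (\sum_(i <- r | P i) F i) D = \sum_(i <- r | P i) hsdot (F i) D.
Proof.
rewrite /hsdot mulmx_suml.
by elim/big_rec2: _ => [|i y z _ <-]; rewrite ?mxtrace0 // mxtraceD raddfD.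
Qed.

Lemma hsdotDr A B D : hsdot D (A + B) = hsdot D A + hsdot D B.
Proof. by rewrite hsdotC hsdotDl !(hsdotC D). Qed.

Lemma hsdotBr A B D : hsdot D (A - B) = hsdot D A - hsdot D B.
Proof. by rewrite hsdotC hsdotBl !(hsdotC D). Qed.

Lemma hsdotZr (x : R) A D : hsdot D (rc x *: A) = x * hsdot D A.
Proof. by rewrite hsdotC hsdotZl hsdotC. Qed.

Lemma hsdot_sumr I (r : seq I) (P : pred I) (F : I -> 'M[C]_n) D :
  hsdot D (\sum_(i <- r | P i) F i) = \sum_(i <- r | P i) hsdot D (F i).
Proof. by rewrite hsdotC hsdot_suml; apply: eq_bigr => i _; rewrite hsdotC. Qed.

Lemma hsdotx1 A : hsdot A 1%:M = complex.Re (\tr A).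
Proof. by rewrite /hsdot mulmx1. Qed.

Lemma hsdot_subr2 A B :
  hsdot (A - B) (A - B) = hsdot A A - 2 * hsdot A B + hsdot B B.
Proof. by rewrite !(hsdotBl, hsdotBr) (hsdotC B A); ring. Qed.

Definition sqnormc (z : C) : R := complex.Re z ^+ 2 + complex.Im z ^+ 2.

Lemma sqnormc_ge0 (z : C) : 0 <= sqnormc z.
Proof. by rewrite addr_ge0 ?sqr_ge0. Qed.

Lemma rc_sqnormc (z : C) : rc (sqnormc z) = `|z| ^+ 2.
Proof. exact: add_Re2_Im2. Qed.

Lemma sqnormcJ (z : C) : sqnormc (conjc z) = sqnormc z.
Proof. by case: z => a b; rewrite /sqnormc /= sqrrN. Qed.

Lemma hermitian_entry Z (i j : 'I_n) : Defs.hermitian Z -> Z i j = conjc (Z j i).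
Proof. by move=> hZ; rewrite -{1}hZ adjmxE. Qed.

Lemma hsdot_hermitian Z : Defs.hermitian Z ->
  hsdot Z Z = \sum_i \sum_j sqnormc (Z j i).
Proof.
move=> hZ; rewrite /hsdot /mxtrace raddf_sum; apply: eq_bigr => i _.
rewrite mxE raddf_sum; apply: eq_bigr => j _.
by rewrite (hermitian_entry i j hZ); case: (Z j i) => a b /=; rewrite /sqnormc /=; ring.
Qed.

Lemma hsdot_ge0 Z : Defs.hermitian Z -> 0 <= hsdot Z Z.
Proof.
by move=> hZ; rewrite hsdot_hermitian //; do 2!apply: sumr_ge0 => ? _; exact: sqnormc_ge0.
Qed.

Lemma hsdot_outer (u v : 'cV[C]_n) :
  hsdot (u *m adjmx u) (v *m adjmx v) = sqnormc ((adjmx u *m v) 0 0).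
Proof.
rewrite /hsdot mulmxA mxtrace_mulC /mxtrace big_ord1 -(mulmxA u) (mulmxA (adjmx v)).
rewrite [in LHS]mxE big_ord1.
rewrite -[(adjmx v *m u) 0 0]conjcK -adjmxE adjmxM adjmxK.
by case: ((adjmx u *m v) 0 0) => a b; rewrite /sqnormc /=; ring.
Qed.

End HilbertSchmidt.

Section PositiveSemidefinite.
Variables (R : realType) (n : nat).
Local Notation C := R[i].
Implicit Types A : 'M[C]_n.

Let e (i : 'I_n) : 'cV[C]_n := delta_mx i 0.

Lemma quad_form2 A i j (s t : C) :
  (adjmx (s *: e i + t *: e j) *m A *m (s *: e i + t *: e j)) 0 0 =
  conjc s * s * A i i + conjc s * t * A i j
  + conjc t * s * A j i + conjc t * t * A j j.
Proof.
have adj_e k : adjmx (e k) = delta_mx 0 k.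
  by apply/matrixP => ? ?; rewrite adjmxE !mxE !ord1 eqxx andbT andTb conjc_nat.
have qe k l : adjmx (e k) *m A *m e l = (A k l)%:M.
  by apply/matrixP => ? ?; rewrite !ord1 adj_e -rowE -colE !mxE eqxx mulr1n.
rewrite adjmxD !adjmxZ !(mulmxDl, mulmxDr) -!scalemxAl -!scalemxAr !qe !mxE /=.
ring.
Qed.

Lemma psd_quad_real A (hA : psd A) i j (s t : R) :
  0 <= s ^+ 2 * complex.Re (A i i) - 2 * s * t * sqnormc (A j i)
       + t ^+ 2 * sqnormc (A j i) * complex.Re (A j j).
Proof.
case: hA => hH hq.
have := hq (rc s *: e i + (- (rc t * A j i)) *: e j).
rewrite quad_form2 (hermitian_entry i j hH) lecE => /andP [_].
rewrite /sqnormc.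
move: (A i i) (A j j) (A j i) => [a1 a2] [b1 b2] [c1 c2].
rewrite /conjc /=.
move=> h; lra.
Qed.

Lemma psd_diag_ge0 A i : psd A -> 0 <= complex.Re (A i i).
Proof. by move=> hA; have := psd_quad_real hA i i 1 0; lra. Qed.

Lemma psd_sqnorm_le A i j : psd A ->
  sqnormc (A j i) <= complex.Re (A i i) * complex.Re (A j j).
Proof.
move=> hA.
have Q1 := psd_quad_real hA i j (complex.Re (A j j)) 1.
have Q2 := psd_quad_real hA j i (complex.Re (A i i)) 1.
have Q3 := psd_quad_real hA i j 1 1.
have a0 := psd_diag_ge0 i hA; have b0 := psd_diag_ge0 j hA.
rewrite (hermitian_entry i j hA.1) sqnormcJ in Q2.
have N0 := sqnormc_ge0 (A j i).
move: Q1 Q2 Q3 a0 b0 N0.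
set a := complex.Re (A i i); set b := complex.Re (A j j); set N := sqnormc (A j i).
move=> Q1 Q2 Q3 a0 b0 N0.
case: (lerP N (a * b)) => // h.
have ea : a = 0 by apply/eqP; rewrite eq_le a0 andbT; nra.
have eb : b = 0 by apply/eqP; rewrite eq_le b0 andbT; nra.
rewrite ea eb in Q3 h; nra.
Qed.

Lemma density_purity_le1 A : density A -> hsdot A A <= 1.
Proof.
case=> hA htr; rewrite (hsdot_hermitian hA.1).
have -> : 1 = (\sum_i complex.Re (A i i)) * (\sum_j complex.Re (A j j)) :> R.
  by rewrite -raddf_sum -/(\tr A) htr mulr1.
rewrite mulr_suml; apply: ler_sum => i _; rewrite mulr_sumr; apply: ler_sum => j _.
exact: psd_sqnorm_le.
Qed.

End PositiveSemidefinite.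

Definition maximally_mixed (R : realType) n : 'M[R[i]]_n := rc (n%:R^-1) *: 1%:M.

Lemma density_maximally_mixed (R : realType) n : (0 < n)%N ->
  density (maximally_mixed R n).
Proof.
move=> n_gt0; have nR_gt0 : (0 : R) < n%:R by rewrite ltr0n.
split; last by rewrite mxtraceZ mxtrace1 -(rmorph_nat (@rc R)) -rmorphM mulVf ?gt_eqF.
split; first by rewrite /Defs.hermitian adjmxZ adjmx1 conjc_rc.
move=> v; rewrite -scalemxAr -scalemxAl mulmx1 mxE.
apply: mulr_ge0; first by rewrite /rc ler0c invr_ge0 ltW.
by rewrite mxE; apply: sumr_ge0 => i _; rewrite adjmxE mulrC mulcJ_ge0.
Qed.

Section MatrixExponential.
Local Open Scope classical_set_scope.
Variables (R : realType) (n : nat).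
Local Notation C := R[i].

Lemma expmx_affine (A M0 M1 : 'M[C]_n) (u : R ^nat) (l : R) :
  u @ \oo --> l -> (forall k, exp_partial A k.+1 = M0 + rc (u k) *: M1) ->
  expmx A = M0 + rc l *: M1.
Proof.
move=> ul Ak; apply/matrixP => i j.
have lim_part (f : C -> R) : {morph f : z w / z + w} ->
    (forall x w, f (rc x * w) = x * f w) ->
    (fun k => f (exp_partial A k i j)) @ \oo --> f (M0 i j) + l * f (M1 i j).
  move=> fD fM; rewrite -cvg_shiftS /=.
  have e k : f (exp_partial A k.+1 i j) = f (M0 i j) + u k * f (M1 i j).
    by rewrite Ak !mxE fD fM.
  by rewrite (eq_cvg _ _ e); apply: cvgD; [exact: cvg_cst | exact: cvgMr_tmp].
rewrite mxE (cvg_lim _ (lim_part _ _ (@Re_rcM R))) //; last by case=> ? ? [].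
rewrite (cvg_lim _ (lim_part (@complex.Im R) _ _)) //; last 2 first.
- by case=> ? ? [].
- by move=> x [a b] /=; ring.
rewrite !mxE; case: (M0 i j) => a b; case: (M1 i j) => c e.
by apply/eqP; rewrite eq_complex /=; apply/andP; split; apply/eqP; ring.
Qed.

Lemma exp_partial_scale_idem (P : 'M[C]_n) (b : R) : P *m P = P ->
  forall k, exp_partial (rc b *: P) k.+1 = 1%:M - P + rc (series (exp_coeff b) k.+1) *: P.
Proof.
move=> PP; have powP k : (rc b *: P) ^+ k.+1 = rc (b ^+ k.+1) *: P.
  elim: k => [|k IH]; first by rewrite !expr1.
  by rewrite exprS IH -mulmxE -scalemxAl -scalemxAr PP scalerA -rmorphM -exprS.
elim=> [|k IH].
  rewrite /exp_partial big_ord1 /series /= big_nat1 /exp_coeff /= expr0 fact0 invr1.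
  by rewrite divr1 scale1r rmorph1 scale1r -idmxE subrK.
rewrite /exp_partial big_ord_recr /= -/(exp_partial _ _) IH powP.
rewrite [in RHS]/series /= [in RHS]big_nat_recr //= -/(series _ _) /exp_coeff /=.
rewrite -(rmorph_nat (@rc R)) -fmorphV scalerA -rmorphM.
by rewrite -addrA -scalerDl -rmorphD mulrC.
Qed.

Lemma expmx_scale_idem (P : 'M[C]_n) (b : R) : P *m P = P ->
  expmx (rc b *: P) = 1%:M - P + rc (expR b) *: P.
Proof.
move=> PP; apply: expmx_affine (exp_partial_scale_idem b PP).
by rewrite (cvg_shiftS (series (exp_coeff b))); exact: is_cvg_series_exp_coeff.
Qed.

End MatrixExponential.

Section StochasticBounds.
Variable R : realType.

Lemma sum_mul_le_amgm n (u v : 'I_n -> R) (s : R) : 0 < s ->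
  \sum_i u i * v i <= (\sum_i u i ^+ 2) / (2 * s) + s / 2 * \sum_i v i ^+ 2.
Proof.
move=> s_gt0; rewrite mulr_suml mulr_sumr -big_split /=; apply: ler_sum => i _.
rewrite -subr_ge0.
have -> : u i ^+ 2 / (2 * s) + s / 2 * v i ^+ 2 - u i * v i
          = (u i - s * v i) ^+ 2 / (2 * s) by field; rewrite gt_eqF.
by rewrite divr_ge0 ?sqr_ge0 // mulr_ge0 // ltW.
Qed.

Lemma sum_sqr_sub_uniform n (D : 'I_n -> R) : (0 < n)%N ->
  (forall i, 0 <= D i) -> \sum_i D i = 1 ->
  \sum_i (D i - n%:R^-1) ^+ 2 <= 1 - n%:R^-1.
Proof.
move=> n_gt0 D0 D1; set k : R := n%:R^-1.
have nk : k *+ n = 1 by rewrite -mulr_natr mulVf // pnatr_eq0 -lt0n.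
have DD : \sum_i D i ^+ 2 <= 1.
  rewrite -D1; apply: ler_sum => i _; rewrite expr2 ler_piMr //.
  by rewrite -D1 (bigD1 i) //= lerDl sumr_ge0.
have e i : (D i - k) ^+ 2 = D i ^+ 2 + - (2 * k) * D i + k * k by ring.
rewrite (eq_bigr _ (fun i _ => e i)) !big_split /= -mulr_sumr D1 sumr_const card_ord.
by rewrite -mulrnAr nk; lra.
Qed.

Lemma steering_bound_arith (d : R) : 0 < d ->
  (d + 1) * (1 - d^-1) / (2 * Num.sqrt d) + Num.sqrt d / 2 * (1 - d^-1) + (d + 1) / d
  <= 1 + Num.sqrt d.
Proof.
move=> d_gt0; set s := Num.sqrt d.
have s_gt0 : 0 < s by rewrite sqrtr_gt0.
have -> : d = s * s by rewrite -expr2 sqr_sqrtr ?ltW.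
rewrite -subr_ge0.
have -> : 1 + s - ((s * s + 1) * (1 - (s * s)^-1) / (2 * s)
          + s / 2 * (1 - (s * s)^-1) + (s * s + 1) / (s * s)) = (s - 1) ^+ 2 / (2 * s ^+ 3).
  by field; rewrite gt_eqF.
by rewrite divr_ge0 ?sqr_ge0 // mulr_ge0 // exprn_ge0 // ltW.
Qed.

Lemma sum_stochastic_centered_le d (r D : 'I_d.+1 -> 'I_d -> R) : (0 < d)%N ->
  (forall x, \sum_a r x a = 0) ->
  \sum_x \sum_a r x a ^+ 2 <= 1 - d%:R^-1 ->
  (forall x a, 0 <= D x a) -> (forall x, \sum_a D x a = 1) ->
  \sum_x \sum_a D x a * (r x a + d%:R^-1) <= 1 + Num.sqrt (d%:R : R).
Proof.
move=> d_gt0 r0 r2 D0 D1.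
have dR_gt0 : (0 : R) < d%:R by rewrite ltr0n.
set k : R := d%:R^-1; set s := Num.sqrt (d%:R : R).
have s_gt0 : 0 < s by rewrite sqrtr_gt0.
have row x : \sum_a D x a * (r x a + k)
    <= (\sum_a (D x a - k) ^+ 2) / (2 * s) + s / 2 * \sum_a r x a ^+ 2 + k.
  have -> : \sum_a D x a * (r x a + k) = \sum_a (D x a - k) * r x a + k.
    have e a : D x a * (r x a + k) = (D x a - k) * r x a + (k * r x a + k * D x a).
      by ring.
    rewrite (eq_bigr _ (fun a _ => e a)) !big_split /= -!mulr_sumr r0 D1.
    by rewrite mulr0 mulr1 add0r.
  by rewrite lerD2r sum_mul_le_amgm.
apply: (le_trans (ler_sum _ (fun x _ => row x))).
rewrite !big_split /= -mulr_sumr -mulr_suml sumr_const card_ord.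
apply: le_trans (steering_bound_arith dR_gt0); rewrite -/s -/k.
apply: lerD; last by rewrite -[k *+ _]mulr_natr -natr1 mulrC.
apply: lerD; last by rewrite ler_pM2l ?divr_gt0.
rewrite ler_pM2r ?invr_gt0 ?mulr_gt0 //.
apply: le_trans (_ : \sum_(x < d.+1) (1 - k) <= _).
  by apply: ler_sum => x _; apply: sum_sqr_sub_uniform.
by rewrite sumr_const card_ord -[_ *+ d.+1]mulr_natl -natr1.
Qed.

End StochasticBounds.

Definition gibbs_weight (R : realType) d (beta : R) : R :=
  expR (- beta) / (d%:R - 1 + expR (- beta)).

Lemma gibbs_weight_bounds (R : realType) d (beta : R) : (1 < d)%N -> 0 < beta ->
  0 <= gibbs_weight d beta < d%:R^-1.
Proof.
move=> d_gt1 beta_gt0; rewrite /gibbs_weight; set e := expR (- beta).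
have e_gt0 : 0 < e by exact: expR_gt0.
have e_lt1 : e < 1 by rewrite expR_lt1 oppr_lt0.
have d_ge2 : (2 : R) <= d%:R by rewrite ler_nat.
have den_gt0 : 0 < d%:R - 1 + e by lra.
rewrite divr_ge0 ?(ltW e_gt0) ?(ltW den_gt0) //=.
rewrite ltr_pdivrMr // -[X in _ < X * _]div1r mulrAC ltr_pdivlMr; nra.
Qed.

Lemma gibbs_weight_lt_steering_bound (R : realType) d (beta : R) :
  (1 < d)%N -> 0 < beta -> d.+1%:R * gibbs_weight d beta < 1 + Num.sqrt (d%:R : R).
Proof.
move=> d_gt1 beta_gt0; have [_ w_lt] := andP (gibbs_weight_bounds d_gt1 beta_gt0).
have d_ge1 := ltnW d_gt1; have dR_gt0 : (0 : R) < d%:R by rewrite ltr0n.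
apply: lt_le_trans (_ : d.+1%:R * d%:R^-1 <= _); first by rewrite ltr_pM2l ?ltr0n.
rewrite -natr1 mulrDl mulfV ?gt_eqF // mul1r lerD2l.
apply: le_trans (_ : 1 <= _); first by rewrite invf_le1 // ler1n.
by rewrite -{1}sqrtr1 ler_sqrt // ler1n.
Qed.

Definition uniform_assemblage (R : realType) d : assemblage R d.+1 d d :=
  fun _ _ => rc (d%:R^-1) *: maximally_mixed R d.
Arguments uniform_assemblage : clear implicits.

Section MutuallyUnbiasedBases.
Variables (R : realType) (d : nat) (phi : 'I_d.+1 -> 'I_d -> 'cV[R[i]]_d).
Hypotheses (mub : complete_MUB phi) (d_gt0 : (0 < d)%N).
Variables beta eta : R.
Local Notation C := R[i].

Let orth x a b : (adjmx (phi x a) *m phi x b) 0 0 = (a == b)%:R := mub.1 x a b.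
Let dR_gt0 : (0 : R) < d%:R. Proof. by rewrite ltr0n. Qed.
Let dR_neq0 : (d%:R : R) != 0. Proof. by rewrite gt_eqF. Qed.

Definition mub_proj x a : 'M[C]_d := phi x a *m adjmx (phi x a).
Local Notation P := mub_proj.
Local Notation rho := (rho_iso phi eta).

Lemma mub_proj_hermitian x a : Defs.hermitian (P x a).
Proof. by rewrite /Defs.hermitian /mub_proj adjmxM adjmxK. Qed.

Lemma mxtrace_mub_proj x a : \tr (P x a) = 1.
Proof. by rewrite /mub_proj mxtrace_mulC /mxtrace big_ord1 orth eqxx. Qed.

Lemma mub_proj_idem x a : P x a *m P x a = P x a.
Proof.
have unit : adjmx (phi x a) *m phi x a = 1%:M.
  by apply/matrixP => i j; rewrite !ord1 orth eqxx !mxE.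
by rewrite /mub_proj mulmxA -(mulmxA (phi x a)) unit mulmx1.
Qed.

Lemma hsdot_mub_proj x a b : hsdot (P x a) (P x b) = (a == b)%:R.
Proof. by rewrite hsdot_outer orth; case: eqP; rewrite /sqnormc /= => _; ring. Qed.

Lemma hsdot_mub_proj_unbiased x y a b : x != y ->
  hsdot (P x a) (P y b) = d%:R^-1.
Proof.
move=> xy; rewrite hsdot_outer; apply: (@complexI R).
have := congr1 (fun z => z ^+ 2) (mub.2 x y a b xy).
by rewrite /= -rc_sqnormc -rmorphXn exprVn sqr_sqrtr ?ltW.
Qed.

Lemma sum_mub_proj x : \sum_a P x a = 1%:M.
Proof.
(* The basis vectors are the columns of a unitary U, and U^* U = 1 forces U U^* = 1. *)
pose U : 'M[C]_d := \matrix_(i, j) phi x j i 0.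
have UU : adjmx U *m U = 1%:M.
  apply/matrixP => a b; rewrite [RHS]mxE -(orth x) !mxE.
  by apply: eq_bigr => i _; rewrite !mxE.
apply/matrixP => i k; rewrite -(mulmx1C UU) summxE !mxE.
by apply: eq_bigr => a _; rewrite !mxE big_ord1 !mxE.
Qed.

Definition mub_prob (s : 'M[C]_d) x a : R := hsdot (P x a) s.

Lemma sum_mub_prob s x : \sum_a mub_prob s x a = complex.Re (\tr s).
Proof. by rewrite /mub_prob -hsdot_suml sum_mub_proj hsdotC hsdotx1. Qed.

Lemma hsdot_mub_frame (r : 'I_d.+1 -> 'I_d -> R) x a :
  (forall y, \sum_b r y b = 0) ->
  hsdot (P x a) (\sum_y \sum_b rc (r y b) *: P y b) = r x a.
Proof.
move=> r0; rewrite hsdot_sumr (bigD1 x) //= [X in _ + X]big1 ?addr0 => [|y yx].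
  rewrite hsdot_sumr (bigD1 a) //= [X in _ + X]big1 ?addr0 => [|b ba].
    by rewrite hsdotZr hsdot_mub_proj eqxx mulr1.
  by rewrite hsdotZr hsdot_mub_proj eq_sym (negbTE ba) mulr0.
rewrite hsdot_sumr.
under eq_bigr => b _ do rewrite hsdotZr hsdot_mub_proj_unbiased 1?eq_sym //.
by rewrite -mulr_suml r0 mul0r.
Qed.

Lemma mub_bessel s : density s ->
  \sum_x \sum_a (mub_prob s x a - d%:R^-1) ^+ 2 <= 1 - d%:R^-1.
Proof.
move=> hs; have purity := density_purity_le1 hs.
case: hs => [[hH _] htr].
have trs : complex.Re (\tr s) = 1 by rewrite htr.
set k : R := d%:R^-1.
set r := fun x a => mub_prob s x a - k.
have r0 x : \sum_a r x a = 0.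
  by rewrite sumrB sum_mub_prob trs sumr_const card_ord -mulr_natr mulVf ?gt_eqF ?subrr.
(* With W := sum r P, the frame property gives <tau, W> = <W, W> = sum r^2,
   so expanding 0 <= <tau - W, tau - W> yields sum r^2 <= <tau, tau>. *)
pose tau := s - rc k *: 1%:M.
pose W := \sum_x \sum_a rc (r x a) *: P x a.
have tau_P x a : hsdot tau (P x a) = r x a.
  by rewrite hsdotBl hsdotZl hsdotC (hsdotC 1%:M) !hsdotx1 mxtrace_mub_proj mulr1.
have tau_W : hsdot tau W = \sum_x \sum_a r x a ^+ 2.
  rewrite hsdot_sumr; apply: eq_bigr => x _; rewrite hsdot_sumr.
  by apply: eq_bigr => a _; rewrite hsdotZr tau_P expr2.
have W_W : hsdot W W = \sum_x \sum_a r x a ^+ 2.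
  rewrite {1}/W hsdot_suml; apply: eq_bigr => x _; rewrite hsdot_suml.
  by apply: eq_bigr => a _; rewrite hsdotZl /W hsdot_mub_frame // expr2.
have tau_tau : hsdot tau tau = hsdot s s - k.
  rewrite hsdot_subr2 !(hsdotZl, hsdotZr) hsdotx1 trs hsdotx1 mxtrace1 raddfMn /=.
  by rewrite /k mulVf ?gt_eqF //; lra.
have tau_W_herm : Defs.hermitian (tau - W).
  rewrite /Defs.hermitian /tau /W !adjmxB adjmxZ adjmx1 hH adjmx_sum conjc_rc.
  congr (_ - _); apply: eq_bigr => x _; rewrite adjmx_sum; apply: eq_bigr => a _.
  by rewrite adjmxZ conjc_rc mub_proj_hermitian.
have := hsdot_ge0 tau_W_herm; rewrite hsdot_subr2 tau_W W_W tau_tau; lra.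
Qed.

Lemma mub_prob_stochastic_le s (D : 'I_d.+1 -> 'I_d -> R) : density s ->
  (forall x a, 0 <= D x a) -> (forall x, \sum_a D x a = 1) ->
  \sum_x \sum_a D x a * mub_prob s x a <= 1 + Num.sqrt (d%:R : R).
Proof.
move=> hs D0 D1.
have trs : complex.Re (\tr s) = 1 by rewrite hs.2.
have r0 x : \sum_a (mub_prob s x a - d%:R^-1) = 0.
  rewrite sumrB sum_mub_prob trs sumr_const card_ord -[_^-1 *+ d]mulr_natr.
  by rewrite mulVf ?subrr // pnatr_eq0 -lt0n.
have := sum_stochastic_centered_le d_gt0 r0 (mub_bessel hs) D0 D1.
by under eq_bigr => x _ do under eq_bigr => a _ do rewrite subrK.
Qed.

Definition mub_score (t : assemblage R d.+1 d d) : R :=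
  \sum_x \sum_a hsdot (P x a) (t x a).

Lemma mub_score_unsteerable t : unsteerable t ->
  mub_score t <= 1 + Num.sqrt (d%:R : R).
Proof.
case=> m [p [D [sig [p0 [p1 [D0 [D1 [sig_dens tE]]]]]]]].
have -> : mub_score t = \sum_l p l * \sum_x \sum_a D l x a * mub_prob (sig l) x a.
  rewrite /mub_score; under eq_bigr => x _ do under eq_bigr => a _ do rewrite tE hsdot_sumr.
  under eq_bigr => x _ do rewrite exchange_big.
  rewrite exchange_big; apply: eq_bigr => l _.
  rewrite mulr_sumr; apply: eq_bigr => x _; rewrite mulr_sumr; apply: eq_bigr => a _.
  by rewrite hsdotZr mulrA.
apply: le_trans (_ : \sum_l p l * (1 + Num.sqrt (d%:R : R)) <= _).
  by apply: ler_sum => l _; apply: ler_wpM2l => //; exact: mub_prob_stochastic_le.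
by rewrite -mulr_suml p1 mul1r.
Qed.

Lemma herm_family_mub_proj : herm_family P.
Proof. by move=> x a; exact: mub_proj_hermitian. Qed.

Lemma expmx_mub_proj x a :
  expmx ((- rc beta) *: P x a) = 1%:M - P x a + rc (expR (- beta)) *: P x a.
Proof. by rewrite -rmorphN expmx_scale_idem // mub_proj_idem. Qed.

Lemma gibbs_mub_proj (t : assemblage R d.+1 d d) x a :
  complex.Re (\tr (P x a *m gibbs beta t P x a)) = prob t x a * gibbs_weight d beta.
Proof.
have trE : \tr (expmx ((- rc beta) *: P x a)) = rc (d%:R - 1 + expR (- beta)).
  rewrite expmx_mub_proj !mxtraceD raddfN /= mxtraceZ mxtrace1 mxtrace_mub_proj.
  by rewrite mulr1 !rmorphD rmorphN rmorph_nat rmorph1.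
have trPE : \tr (P x a *m expmx ((- rc beta) *: P x a)) = rc (expR (- beta)).
  rewrite expmx_mub_proj mulmxDr mulmxBr mulmx1 mub_proj_idem subrr add0r.
  by rewrite -scalemxAr mub_proj_idem mxtraceZ mxtrace_mub_proj mulr1.
rewrite /gibbs -scalemxAr mxtraceZ trE trPE -fmorphV -!rmorphM.
by rewrite /gibbs_weight mulrAC mulrA.
Qed.

Lemma Qc_mub_proj (t : assemblage R d.+1 d d) :
  (forall x a, prob t x a = d%:R^-1) ->
  Qc beta t P = mub_score t / d.+1%:R - gibbs_weight d beta.
Proof.
move=> pt; rewrite /Qc /mub_score.
under eq_bigr => x _ do under eq_bigr => a _ do rewrite gibbs_mub_proj pt.
under eq_bigr => x _ do rewrite sumrB sumr_const card_ord.
rewrite sumrB sumr_const card_ord mulrC mulrBl; congr (_ - _).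
rewrite -mulrnAl -[_^-1 *+ d]mulr_natr mulVf // mul1r.
by rewrite -[gibbs_weight d beta *+ _]mulr_natr mulfK ?pnatr_eq0.
Qed.

Lemma mub_score_const (t : assemblage R d.+1 d d) (v : R) :
  (forall x a, hsdot (P x a) (t x a) = v) -> mub_score t = v * (d%:R * d.+1%:R).
Proof.
move=> tv; rewrite /mub_score; under eq_bigr => x _ do under eq_bigr => a _ do rewrite tv.
by rewrite !sumr_const !card_ord -mulrnA -natrM mulr_natr.
Qed.

Lemma mxtrace_rho_iso x a : \tr (rho x a) = rc (d%:R^-1).
Proof.
rewrite /rho_iso mxtraceD !mxtraceZ mxtrace_mub_proj mxtrace1 mulr1.
by rewrite -(rmorph_nat (@rc R)) -rmorphM -rmorphD; congr rc; field.
Qed.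

Lemma prob_rho_iso x a : prob rho x a = d%:R^-1.
Proof. by rewrite /prob mxtrace_rho_iso. Qed.

Lemma mub_score_rho_iso :
  mub_score rho = (d%:R + 1) * (1 + eta * (d%:R - 1)) / d%:R.
Proof.
rewrite (@mub_score_const _ (eta / d%:R + (1 - eta) / d%:R ^+ 2)) => [|x a].
  by rewrite -natr1; field.
by rewrite /rho_iso hsdotDr !hsdotZr hsdot_mub_proj eqxx hsdotx1 mxtrace_mub_proj !mulr1.
Qed.

Lemma mxtrace_uniform_assemblage x a : \tr (uniform_assemblage R d x a) = rc (d%:R^-1).
Proof. by rewrite mxtraceZ (density_maximally_mixed R d_gt0).2 mulr1. Qed.

Lemma uniform_assemblage_Lrho : Lrho rho (uniform_assemblage R d).
Proof.
split.
  exists 1%N, (fun _ => 1), (fun _ _ _ => d%:R^-1), (fun _ => maximally_mixed R d).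
  split=> //; split; first by rewrite big_ord1.
  split=> [*|]; first by rewrite invr_ge0 ler0n.
  split=> [l x|]; first by rewrite sumr_const card_ord -[_^-1 *+ d]mulr_natr mulVf.
  split=> [l|x a]; first exact: density_maximally_mixed.
  by rewrite big_ord1 mul1r.
by move=> x a; rewrite mxtrace_rho_iso mxtrace_uniform_assemblage.
Qed.

Lemma Qc_Lrho_iso t : Lrho rho t ->
  Qc beta t P = mub_score t / d.+1%:R - gibbs_weight d beta.
Proof.
by case=> _ tr_t; apply: Qc_mub_proj => x a; rewrite /prob tr_t mxtrace_rho_iso.
Qed.

Lemma Qc_rho_iso : Qc beta rho P = mub_score rho / d.+1%:R - gibbs_weight d beta.
Proof. exact: Qc_mub_proj prob_rho_iso. Qed.

Lemma Qc_Lrho_iso_le t : Lrho rho t ->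
  Qc beta t P <= (1 + Num.sqrt (d%:R : R)) / d.+1%:R - gibbs_weight d beta.
Proof.
move=> Lt; rewrite Qc_Lrho_iso // lerD2r ler_pM2r ?invr_gt0 ?ltr0n //.
exact: mub_score_unsteerable Lt.1.
Qed.

Lemma mub_score_uniform : mub_score (uniform_assemblage R d) = (d%:R + 1) / d%:R.
Proof.
rewrite (@mub_score_const _ (d%:R^-1 * d%:R^-1)) => [|x a].
  by rewrite -natr1; field.
by rewrite /uniform_assemblage /maximally_mixed !hsdotZr hsdotx1 mxtrace_mub_proj /= mulr1.
Qed.

Lemma Qc_uniform_gt0 : gibbs_weight d beta < d%:R^-1 ->
  0 < Qc beta (uniform_assemblage R d) P.
Proof.
move=> w_lt; rewrite Qc_mub_proj => [|x a]; last by rewrite /prob mxtrace_uniform_assemblage.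
rewrite mub_score_uniform -natr1.
by rewrite mulrAC mulfV ?mul1r ?subr_gt0 // gt_eqF // ltr_wpDl.
Qed.

End MutuallyUnbiasedBases.

Lemma xi_max_ge_ratio (R : realType) nx na d (beta : R) (s H t0 : assemblage R nx na d)
    (M : R) :
  herm_family H -> Lrho s t0 -> 0 < Qc beta t0 H ->
  (forall t, Lrho s t -> Qc beta t H <= M) -> M <= Qc beta s H ->
  ((Qc beta s H / M)%:E <= xi_max beta s)%E.
Proof.
move=> hH Lt0 Qt0 QcM Ms.
have den_le : (denom beta s H <= M%:E)%E.
  by apply: ge_ereal_sup => _ [t Lt <-]; rewrite lee_fin QcM.
have den_ge : ((Qc beta t0 H)%:E <= denom beta s H)%E.
  by apply: ereal_sup_ubound; exists t0.
case E : (denom beta s H) den_le den_ge => [r| |] r_le r_ge; last 2 first.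
- by move: r_le; rewrite leye_eq.
- by move: r_ge; rewrite leeNy_eq.
rewrite lee_fin in r_le r_ge.
have r_gt0 : 0 < r := lt_le_trans Qt0 r_ge.
have Qs_ge0 : 0 <= Qc beta s H by rewrite (le_trans _ Ms) // (le_trans (ltW r_gt0)).
apply: le_trans (_ : (Qc beta s H / r)%:E <= _)%E.
  by rewrite lee_fin ler_wpM2l // lef_pV2 ?posrE // (lt_le_trans r_gt0).
apply: ereal_sup_ubound; exists H; last by rewrite E.
by split; last by rewrite E lte_fin.
Qed.

Lemma ler_ratio_shift (R : realFieldType) (n w U S : R) :
  0 < n -> 0 <= w -> n * w < U -> U <= S ->
  S / U <= (S / n - w) / (U / n - w).
Proof.
move=> n_gt0 w_ge0 wU US; set K := n * w.
have K_ge0 : 0 <= K by rewrite mulr_ge0 // ltW.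
have U_gt0 : 0 < U by apply: le_lt_trans wU.
have -> : (S / n - w) / (U / n - w) = (S - K) / (U - K).
  by rewrite /K; field; rewrite !gt_eqF // subr_gt0.
rewrite -subr_ge0.
have -> : (S - K) / (U - K) - S / U = K * (S - U) / (U * (U - K)).
  by field; rewrite !gt_eqF // subr_gt0.
by rewrite divr_ge0 ?mulr_ge0 ?subr_ge0 // ltW // subr_gt0.
Qed.

Lemma prime_power_gt1 d : prime_power d -> (1 < d)%N.
Proof.
case=> p [k [p_prime k_gt0 ->]].
by apply: leq_trans (prime_gt1 p_prime) _; rewrite -{1}(expn1 p) leq_pexp2l // prime_gt0.
Qed.

Lemma iso_threshold_ratio_gt1 (R : realType) (d eta : R) : 1 < d ->
  (Num.sqrt d + (d + Num.sqrt d + 1)^-1)^-1 < eta ->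
  1 < ((d + 1) * (1 + eta * (d - 1))) / (d * (1 + Num.sqrt d)).
Proof.
move=> d_gt1; set s := Num.sqrt d.
have d_gt0 : 0 < d := lt_trans ltr01 d_gt1.
have s_gt1 : 1 < s by rewrite -sqrtr1 ltr_sqrt.
have -> : d = s * s by rewrite -expr2 sqr_sqrtr ?ltW.
have -> : (s + (s * s + s + 1)^-1)^-1 = (s * s + s + 1) / ((s * s + 1) * (s + 1)).
  by field; rewrite !gt_eqF //; nra.
have den_gt0 : 0 < (s * s + 1) * (s + 1) by nra.
rewrite ltr_pdivrMr // => eta_gt; rewrite ltr_pdivlMr; last by nra.
have gap1 : 0 < s - 1 by rewrite subr_gt0.
have gap2 : 0 < eta * ((s * s + 1) * (s + 1)) - (s * s + s + 1) by rewrite subr_gt0.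
have := mulr_gt0 gap1 gap2; nra.
Qed.

Theorem mainTheorem4 (R : realType) (d : nat)
    (phi : 'I_d.+1 -> 'I_d -> 'cV[R[i]]_d) (beta eta : R) :
  prime_power d ->
  complete_MUB phi ->
  0 < beta ->
  0 <= eta <= 1 ->
  (Num.sqrt (d%:R : R) + (d%:R + Num.sqrt (d%:R : R) + 1)^-1)^-1 < eta ->
  let c : R := ((d%:R + 1) * (1 + eta * (d%:R - 1)))
               / (d%:R * (1 + Num.sqrt (d%:R : R))) in
  (c%:E <= xi_max beta (rho_iso phi eta))%E /\ 1 < c.
Proof.
move=> /prime_power_gt1 d_gt1 mub beta_gt0 _ eta_gt c.
have d_gt0 := ltnW d_gt1.
have c_gt1 : 1 < c by apply: iso_threshold_ratio_gt1; rewrite // ltr1n.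
split=> //.
have [w_ge0 w_lt] := andP (gibbs_weight_bounds d_gt1 beta_gt0).
set U := 1 + Num.sqrt (d%:R : R); set S := mub_score phi (rho_iso phi eta).
have cE : c = S / U by rewrite /S mub_score_rho_iso // /c /U invfM mulrA.
have U_le_S : U <= S.
  have U_gt0 : 0 < U by rewrite /U addr_gt0 ?sqrtr_gt0 ?ltr0n.
  by move: c_gt1; rewrite cE ltr_pdivlMr // mul1r => /ltW.
apply: le_trans (xi_max_ge_ratio (herm_family_mub_proj phi)
  (uniform_assemblage_Lrho mub d_gt0 eta) (Qc_uniform_gt0 mub d_gt0 w_lt)
  (Qc_Lrho_iso_le mub d_gt0 beta (eta := eta)) _).
  rewrite Qc_rho_iso // lee_fin cE ler_ratio_shift ?ltr0n //.
  exact: gibbs_weight_lt_steering_bound.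
by rewrite Qc_rho_iso // lerD2r ler_pM2r ?invr_gt0 ?ltr0n.
Qed.
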